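(* Let $(A,\to,1)$ be an algebra of type $(2,0)$ satisfying (Re), (M) and (Ex). Then the properties (B), (BB) and ( * ) are pairwise equivalent for $(A,\to,1)$.
   Context: Properties, required for all $x,y,z\in A$: (Re) $x\to x=1$; (M) $1\to x=x$; (Ex) $x\to(y\to z)=y\to(x\to z)$; (B) $(y\to z)\to((x\to y)\to(x\to z))=1$; (BB) $(y\to z)\to((z\to x)\to(y\to x))=1$; ( * ) $y\to z=1$ implies $(x\to y)\to(x\to z)=1$. *)

Definition prop_Re {A : Type} (imp : A -> A -> A) (one : A) : Prop :=
  forall x : A, imp x x = one.

Definition prop_M {A : Type} (imp : A -> A -> A) (one : A) : Prop :=
  forall x : A, imp one x = x.

Definition prop_Ex {A : Type} (imp : A -> A -> A) (one : A) : Prop :=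
  forall x y z : A, imp x (imp y z) = imp y (imp x z).

Definition prop_B {A : Type} (imp : A -> A -> A) (one : A) : Prop :=
  forall x y z : A, imp (imp y z) (imp (imp x y) (imp x z)) = one.

Definition prop_BB {A : Type} (imp : A -> A -> A) (one : A) : Prop :=
  forall x y z : A, imp (imp y z) (imp (imp z x) (imp y x)) = one.

Definition prop_star {A : Type} (imp : A -> A -> A) (one : A) : Prop :=
  forall x y z : A, imp y z = one -> imp (imp x y) (imp x z) = one.


(* (B) and (BB) differ only by exchanging the two premises, so (Ex) makes them
   the same identity. (B) gives property star by substituting 1 for [y -> z]
   and using (M). Conversely, star applied to the tautology [y -> ((y -> z) -> z)] = 1 yields
   [(x -> y) -> (x -> ((y -> z) -> z))] = 1, which is (B) after exchanging premises. *)

Section ImplicationAlgebra.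

Context {A : Type} {imp : A -> A -> A} {one : A}.

Lemma prop_B_star : prop_M imp one -> prop_B imp one -> prop_star imp one.
Proof.
  intros M H x y z Hyz.
  rewrite <- (H x y z), Hyz, M.
  reflexivity.
Qed.

Hypothesis imp_exchange : prop_Ex imp one.

Lemma prop_B_iff_BB : prop_B imp one <-> prop_BB imp one.
Proof.
  split; intros H x y z; rewrite imp_exchange; apply H.
Qed.

Lemma imp_modus_ponens : prop_Re imp one -> forall y z : A, imp y (imp (imp y z) z) = one.
Proof.
  intros Re y z.
  rewrite imp_exchange.
  apply Re.
Qed.

Lemma prop_star_B : prop_Re imp one -> prop_star imp one -> prop_B imp one.
Proof.
  intros Re H x y z.
  rewrite imp_exchange, <- (imp_exchange x (imp y z) z).
  apply H, imp_modus_ponens, Re.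
Qed.

End ImplicationAlgebra.

Theorem theorem2p2 (A : Type) (imp : A -> A -> A) (one : A) :
  prop_Re imp one -> prop_M imp one -> prop_Ex imp one ->
  (prop_B imp one <-> prop_BB imp one) /\
  (prop_BB imp one <-> prop_star imp one) /\
  (prop_B imp one <-> prop_star imp one).
Proof.
  intros Re M Ex.
  assert (B_BB := prop_B_iff_BB Ex).
  assert (B_star : prop_B imp one <-> prop_star imp one).
  { split; [exact (prop_B_star M) | exact (prop_star_B Ex Re)]. }
  split; [exact B_BB |].
  split; [| exact B_star].
  split; intro H.
  - apply B_star, B_BB, H.
  - apply B_BB, B_star, H.
Qed.
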